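(* Let $A$ be an enriched matrix. If $A$ admits a suitable LR-ordering, then $A$ contains none of the following enriched matrices (all of whose rows are unlabeled and uncolored) as a subconfiguration: $M_0=\begin{pmatrix}1&0&1&1\\1&1&1&0\\0&1&1&1\end{pmatrix}$, $M_{II}(4)=\begin{pmatrix}0&1&1&1\\1&1&0&0\\0&1&1&0\\1&1&0&1\end{pmatrix}$, $M_V=\begin{pmatrix}1&1&0&0&0\\0&0&1&1&0\\1&1&1&1&0\\1&0&0&1&1\end{pmatrix}$, and $S_0(k)$ for any even $k\geq 4$, where $S_0(k)$ is the $(k+1)\times k$ $(0,1)$-matrix whose first row has a $1$ in every column, whose $(j+1)$-th row, for $j=1,\dots,k-1$, has $1$'s exactly in columns $j$ and $j+1$, and whose last row has $1$'s exactly in columns $1$ and $k$.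
   Context: Rows of a $(0,1)$-matrix are identified with the set of columns in which they have a $1$; a row is empty if it has no $1$. An enriched matrix is a $(0,1)$-matrix together with an assignment of labels and colors to some (possibly none) of its rows such that: each row is either unlabeled or labeled with one of L, R, LR (an LR-row, L-row, R-row is a row labeled LR, L, R respectively); each row is either uncolored or colored red or blue; the only rows that may be colored are those labeled L or R and the empty LR-rows; and all empty LR-rows are colored with the same color. A row is a non-LR-row if it is not an LR-row. An LR-ordering of an enriched matrix $A$ is a linear ordering $\Pi$ of its columns such that: (1) in $\Pi$ the $1$'s of every non-LR-row appear consecutively; (2) the $1$'s of every nonempty L-row start in the first column of $\Pi$, and the $1$'s of every nonempty R-row end in the last column of $\Pi$; (3) in $\Pi$ the $1$'s of the complement of every LR-row (obtained by interchanging $0$'s and $1$'s) appear consecutively. Blocks with respect to an LR-ordering $\Pi$: for each row labeled L or LR having a $1$ in the first column of $\Pi$, its L-block is the maximal set of consecutive columns of $\Pi$, starting in the first column, on which the row has a $1$; R-blocks are defined analogously for rows labeled R or LR having a $1$ in the last column of $\Pi$ (maximal set of consecutive columns ending in the last column on which the row has a $1$); for each unlabeled row, its U-block is the set of columns in which it has a $1$. An LR-ordering is suitable if: the L-blocks of those LR-rows with exactly two blocks are disjoint from every R-block; the R-blocks of those LR-rows with exactly two blocks are disjoint from every L-block; and for each LR-row and each U-block, the U-block has empty intersection with either the L-block or the R-block of that LR-row. For enriched matrices $A$ and $B$, $B$ is a subconfiguration of $A$ if $B$ equals some submatrix of $A$ up to permutations of rows and/or columns, with the labels and colors of the rows remaining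 the same. *)

From mathcomp Require Import all_boot all_order all_algebra all_fingroup.
Set Implicit Arguments. Unset Strict Implicit. Unset Printing Implicit Defensive.

Inductive label := Lab_L | Lab_R | Lab_LR.
Inductive color := Red | Blue.

Record enr (m n : nat) := Enr {
  ent : 'M[bool]_(m, n);
  lab : 'I_m -> option label;   (* None = unlabeled *)
  col : 'I_m -> option color    (* None = uncolored *)
}.

Section Enriched.
Variables (m n : nat) (A : enr m n).

Definition row_empty (r : 'I_m) : Prop := forall j : 'I_n, ent A r j = false.

Definition enriched : Prop :=
  (forall r, col A r <> None ->
     lab A r = Some Lab_L \/ lab A r = Some Lab_R \/
     (lab A r = Some Lab_LR /\ row_empty r)) /\
  (exists c : color, forall r, lab A r = Some Lab_LR -> row_empty r ->
     col A r = Some c).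

(* A linear ordering of the columns: position p holds column s p. *)
Variable s : {perm 'I_n}.

Definition rowpos (r : 'I_m) (p : 'I_n) : bool := ent A r (s p).

Definition consec (f : 'I_n -> bool) : Prop :=
  forall p1 p2 p3 : 'I_n, p1 <= p2 -> p2 <= p3 -> f p1 -> f p3 -> f p2.

Definition at_first (f : 'I_n -> bool) : Prop :=
  exists p : 'I_n, val p = 0 /\ f p.
Definition at_last (f : 'I_n -> bool) : Prop :=
  exists p : 'I_n, val p = n.-1 /\ f p.

Definition LR_ordering : Prop :=
  (forall r, lab A r <> Some Lab_LR -> consec (rowpos r)) /\
  (forall r, lab A r = Some Lab_L -> ~ row_empty r -> at_first (rowpos r)) /\
  (forall r, lab A r = Some Lab_R -> ~ row_empty r -> at_last (rowpos r)) /\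
  (forall r, lab A r = Some Lab_LR -> consec (fun p => ~~ rowpos r p)).

(* blocks, as sets of positions; they are empty exactly when the row has a
   0 in the first (resp. last) position, i.e. when the block is undefined *)
Definition Lblock (r : 'I_m) (p : 'I_n) : bool :=
  [forall q : 'I_n, (q <= p) ==> rowpos r q].
Definition Rblock (r : 'I_m) (p : 'I_n) : bool :=
  [forall q : 'I_n, (p <= q) ==> rowpos r q].
Definition Ublock (r : 'I_m) (p : 'I_n) : bool := rowpos r p.

Definition disj (X Y : 'I_n -> bool) : Prop := forall p, ~~ (X p && Y p).

Definition has_L_or_LR (r : 'I_m) : Prop :=
  lab A r = Some Lab_L \/ lab A r = Some Lab_LR.
Definition has_R_or_LR (r : 'I_m) : Prop :=
  lab A r = Some Lab_R \/ lab A r = Some Lab_LR.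

(* an LR-row with exactly two blocks: it has an L-block and an R-block,
   and these are distinct (equivalently disjoint) *)
Definition two_blocks (r : 'I_m) : Prop :=
  lab A r = Some Lab_LR /\ at_first (rowpos r) /\ at_last (rowpos r) /\
  disj (Lblock r) (Rblock r).

Definition suitable : Prop :=
  LR_ordering /\
  (forall r r', two_blocks r -> has_R_or_LR r' -> disj (Lblock r) (Rblock r')) /\
  (forall r r', two_blocks r -> has_L_or_LR r' -> disj (Rblock r) (Lblock r')) /\
  (forall r u, lab A r = Some Lab_LR -> lab A u = None ->
     disj (Ublock u) (Lblock r) \/ disj (Ublock u) (Rblock r)).

End Enriched.

Definition subconf (p q m n : nat) (B : enr p q) (A : enr m n) : Prop :=
  exists (f : 'I_p -> 'I_m) (g : 'I_q -> 'I_n),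
    injective f /\ injective g /\
    (forall i j, ent B i j = ent A (f i) (g j)) /\
    (forall i, lab B i = lab A (f i)) /\
    (forall i, col B i = col A (f i)).

Definition mx_of (m n : nat) (l : seq (seq nat)) : 'M[bool]_(m, n) :=
  \matrix_(i < m, j < n) (nth 0 (nth [::] l i) j == 1).

Definition plain (m n : nat) (M : 'M[bool]_(m, n)) : enr m n :=
  Enr M (fun _ => None) (fun _ => None).

Definition M0 : enr 3 4 := plain (mx_of 3 4
  [:: [:: 1; 0; 1; 1]; [:: 1; 1; 1; 0]; [:: 0; 1; 1; 1]]).

Definition MII4 : enr 4 4 := plain (mx_of 4 4
  [:: [:: 0; 1; 1; 1]; [:: 1; 1; 0; 0]; [:: 0; 1; 1; 0]; [:: 1; 1; 0; 1]]).

Definition MV : enr 4 5 := plain (mx_of 4 5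
  [:: [:: 1; 1; 0; 0; 0]; [:: 0; 0; 1; 1; 0]; [:: 1; 1; 1; 1; 0];
      [:: 1; 0; 0; 1; 1]]).

(* S_0(k), with 0-indexed rows 0..k and columns 0..k-1 *)
Definition S0 (k : nat) : enr k.+1 k := plain (\matrix_(i < k.+1, j < k)
  if i == 0 :> nat then true
  else if i == k :> nat then (j == 0 :> nat) || (j == k.-1 :> nat)
  else (j == i.-1 :> nat) || (j == i :> nat)).

(** Every row of the listed matrices is unlabeled, and in an LR-ordering the
    ones of an unlabeled row are consecutive; so a subconfiguration would give
    each of these matrices a column order with the consecutive-ones property.
    None has one: for [M0], [MII4] and [MV] this is a finite check over all
    column orders, and in [S0 k] every column [c] lies in two rows that leave
    it towards different columns [x] and [y], so if [c] is leftmost, the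
    nearer of [x] and [y] sits between [c] and the other one in a row that
    misses it (this needs only [3 <= k], not parity).  Neither labels,
    colors nor suitability play any role. *)
From mathcomp Require Import all_boot all_order all_algebra all_fingroup.
From mathcomp Require Import zify.
Set Implicit Arguments. Unset Strict Implicit. Unset Printing Implicit Defensive.

Section ConsecutiveOnes.
Variables p q : nat.

Definition consecutive_ones (B : 'I_p -> 'I_q -> bool) (pos : 'I_q -> nat) :=
  forall i j1 j2 j3,
    pos j1 <= pos j2 -> pos j2 <= pos j3 -> B i j1 -> B i j3 -> B i j2.

Lemma sorted_enum_by (pos : 'I_q -> nat) :
  exists2 l : seq 'I_q, perm_eq l (enum 'I_q) &
    forall a b, index a l < index b l -> pos a <= pos b.
Proof.
pose le_pos a b := pos a <= pos b.
exists (sort le_pos (enum 'I_q)); first by rewrite perm_sort.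
have le_pos_total : total le_pos by move=> a b; apply: leq_total.
have le_pos_trans : transitive le_pos by move=> b a c; apply: leq_trans.
move=> a b; apply: (sorted_ltn_index le_pos_trans (sort_sorted le_pos_total _));
  by rewrite mem_sort mem_enum.
Qed.

(* Columns are indexed by [nat] rather than ['I_q] so that the check below
   reduces under [vm_compute]: the enumeration of ['I_q] does not. *)
Definition consecutive_along (B : nat -> nat -> bool) (l : seq nat) : bool :=
  let cols := iota 0 q in
  all (fun i => all (fun j1 => all (fun j2 => all (fun j3 =>
    [&& index j1 l < index j2 l, index j2 l < index j3 l, B i j1 & B i j3]
      ==> B i j2) cols) cols) cols) (iota 0 p).

Definition no_consecutive_order (B : nat -> nat -> bool) : bool :=
  all (fun l => ~~ consecutive_along B l) (permutations (iota 0 q)).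

Lemma no_consecutive_order_sound (B : 'I_p -> 'I_q -> bool) (Bn : nat -> nat -> bool) :
  (forall i j, B i j = Bn i j) -> no_consecutive_order Bn ->
  forall pos, ~ consecutive_ones B pos.
Proof.
move=> BE noBn pos B_c1p; have [l l_perm l_sorted] := sorted_enum_by pos.
have l_order : map val l \in permutations (iota 0 q).
  by rewrite mem_permutations -val_enum_ord perm_map.
move/allP: noBn => /(_ _ l_order)/negP; apply.
apply/allP=> i /[!mem_iota] /= lt_ip; apply/allP=> j1 /[!mem_iota] /= lt_j1q.
apply/allP=> j2 /[!mem_iota] /= lt_j2q; apply/allP=> j3 /[!mem_iota] /= lt_j3q.
apply/implyP=> /and4P[lt12 lt23].
move: lt12 lt23; rewrite -[j1]/(val (Ordinal lt_j1q)) -[j2]/(val (Ordinal lt_j2q)).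
rewrite -[j3]/(val (Ordinal lt_j3q)) -[i]/(val (Ordinal lt_ip)).
rewrite !(index_map val_inj) -!BE => lt12 lt23.
exact: B_c1p (l_sorted _ _ lt12) (l_sorted _ _ lt23).
Qed.

Definition forked (B : 'I_p -> 'I_q -> bool) (c : 'I_q) :=
  exists x y r1 r2, [&& B r1 c, B r2 c, B r1 x, ~~ B r2 x, B r2 y & ~~ B r1 y].

Lemma forked_no_consecutive (B : 'I_p -> 'I_q -> bool) pos :
  0 < q -> (forall c, forked B c) -> ~ consecutive_ones B pos.
Proof.
move=> q_gt0 B_forked B_c1p.
have [c _ c_min] := arg_minnP pos (isT : xpredT (Ordinal q_gt0)).
have [x [y [r1 [r2 /and5P[r1c r2c r1x r2Nx /andP[r2y r1Ny]]]]]] := B_forked c.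
have [le_xy|lt_yx] := leqP (pos x) (pos y).
  by move: (B_c1p r2 c x y (c_min x isT) le_xy r2c r2y); rewrite (negbTE r2Nx).
by move: (B_c1p r1 c y x (c_min y isT) (ltnW lt_yx) r1c r1x); rewrite (negbTE r1Ny).
Qed.

End ConsecutiveOnes.

Lemma mx_of_no_consecutive p q (l : seq (seq nat)) :
  no_consecutive_order p q (fun i j => nth 0 (nth [::] l i) j == 1) ->
  forall pos, ~ consecutive_ones (mx_of p q l) pos.
Proof. by apply: no_consecutive_order_sound => i j; rewrite mxE. Qed.

Lemma S0E k (i : 'I_k.+1) (j : 'I_k) : ent (S0 k) i j =
  (i == 0 :> nat) || (i == k :> nat) && ((j == 0 :> nat) || (j == k.-1 :> nat))
  || [&& i != 0 :> nat, i != k :> nat & (j == i.-1 :> nat) || (j == i :> nat)].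
Proof. by rewrite mxE; case: eqP => //= _; case: eqP; rewrite ?orbF. Qed.

Lemma S0_forked k (c : 'I_k) : 3 <= k -> forked (ent (S0 k)) c.
Proof.
move=> k_ge3; have lt_ck := ltn_ord c.
have [c0|c_gt0] := posnP c.
  have lt_1k : 1 < k by lia.
  have lt_k1k : k.-1 < k by lia.
  have lt_1k1 : 1 < k.+1 by lia.
  exists (Ordinal lt_1k), (Ordinal lt_k1k), (Ordinal lt_1k1), ord_max.
  by rewrite !S0E /= c0; lia.
have [c_eq_k1|c_neq_k1] := eqVneq (c : nat) k.-1.
  have lt_k2k : k - 2 < k by lia.
  have lt_0k : 0 < k by lia.
  have lt_k1k1 : k.-1 < k.+1 by lia.
  exists (Ordinal lt_k2k), (Ordinal lt_0k), (Ordinal lt_k1k1), ord_max.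
  by rewrite !S0E /= c_eq_k1; lia.
have lt_c1k : c.-1 < k by lia.
have lt_cSk : c.+1 < k by lia.
have lt_ck1 : c < k.+1 by lia.
have lt_cSk1 : c.+1 < k.+1 by lia.
exists (Ordinal lt_c1k), (Ordinal lt_cSk), (Ordinal lt_ck1), (Ordinal lt_cSk1).
by rewrite !S0E /=; lia.
Qed.

Lemma S0_no_consecutive k pos : 3 <= k -> ~ consecutive_ones (ent (S0 k)) pos.
Proof.
move=> k_ge3; apply: forked_no_consecutive; first lia.
by move=> c; apply: S0_forked.
Qed.

Lemma plain_subconf_consecutive m n p q (A : enr m n) (s : {perm 'I_n})
    (M : 'M[bool]_(p, q)) :
  LR_ordering A s -> subconf (plain M) A ->
  exists pos, consecutive_ones M pos.
Proof.
move=> [unlabeled_consec _] [f [g [_ [_ [ME [labE _]]]]]].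
exists (fun j => val ((s^-1)%g (g j))) => i j1 j2 j3 le12 le23.
have f_notLR : lab A (f i) <> Some Lab_LR by rewrite -labE.
have := unlabeled_consec _ f_notLR _ _ _ le12 le23.
by rewrite /rowpos !permKV !ME.
Qed.

Theorem mainTheorem2 (m n : nat) (A : enr m n) :
  enriched A ->
  (exists s : {perm 'I_n}, suitable A s) ->
  ~ subconf M0 A /\ ~ subconf MII4 A /\ ~ subconf MV A /\
  (forall k : nat, 4 <= k -> ~~ odd k -> ~ subconf (S0 k) A).
Proof.
move=> _ [s [ord_s _]].
have no_subconf p q (M : 'M_(p, q)) :
    (forall pos, ~ consecutive_ones M pos) -> ~ subconf (plain M) A.
  by move=> noM /(plain_subconf_consecutive ord_s)[pos]; apply: noM.
split; [|split; [|split]].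
- by apply/no_subconf/mx_of_no_consecutive; vm_compute.
- by apply/no_subconf/mx_of_no_consecutive; vm_compute.
- by apply/no_subconf/mx_of_no_consecutive; vm_compute.
- move=> k k_ge4 _; apply/no_subconf => pos.
  by apply: S0_no_consecutive; apply: ltnW.
Qed.
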